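(* Assume that for every $y\in\mathcal Y$ the map $u\mapsto\ell(y,u)$ is convex and twice continuously differentiable. Then for every $y,z\in\mathcal Y$ and every $\lambda>0$, $$\big\|\hat f_{\lambda;D^y}-\hat f_{\lambda;D^z}\big\|_{\mathcal H}\le\sqrt{K_{n+1,n+1}}\,\frac{\rho^{(1)}_\lambda(y)}{\lambda(n+1)},$$ where $\rho^{(1)}_\lambda(y)=\frac12\big|-\partial_2\ell(z,\hat f_{\lambda;D^z}(X_{n+1}))+\partial_2\ell(y,\hat f_{\lambda;D^z}(X_{n+1}))\big|$.
   Context: Let $\mathcal X\subset\mathbb R^d$, $\mathcal Y\subset\mathbb R$, $D=\{(X_1,Y_1),\dots,(X_n,Y_n)\}$ i.i.d. with distribution $P$ on $\mathcal X\times\mathcal Y$, $(X_{n+1},Y_{n+1})\sim P$ independent. For $y\in\mathcal Y$, $D^y=D\cup\{(X_{n+1},y)\}$. $\mathcal H$ is an RKHS of functions $\mathcal X\to\mathbb R$ with kernel $\kappa_{\mathcal H}$, and $K_{n+1,n+1}=\kappa_{\mathcal H}(X_{n+1},X_{n+1})$. For a loss $\ell:\mathcal Y\times\mathcal Y\to\mathbb R$ and $\lambda>0$, $\hat f_{\lambda;D^y}$ is the minimizer over $f\in\mathcal H$ of $\frac1{n+1}\sum_{(x,y')\in D^y}\ell(y',f(x))+\lambda\|f\|_{\mathcal H}^2$. $\partial_2\ell(y,u)$ denotes the derivative of $u\mapsto\ell(y,u)$. *)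

From HB Require Import structures.
From mathcomp Require Import all_boot all_order all_algebra.
From mathcomp Require Import all_classical all_reals all_analysis.
Set Implicit Arguments. Unset Strict Implicit. Unset Printing Implicit Defensive.
Import Order.TTheory GRing.Theory Num.Theory.
Import numFieldNormedType.Exports.
Local Open Scope ring_scope.
Local Open Scope classical_set_scope.

(* A real Hilbert space V (an R-vector space with an inner product, complete
   for the induced norm) of functions X -> R, where [ev f] is the function
   represented by f, with a reproducing kernel: [kx x] is the representer of
   evaluation at x, i.e. f(x) = <f, kx x>. *)
Definition hnorm (R : realType) (V : lmodType R) (inner : V -> V -> R) (f : V) : R :=
  Num.sqrt (inner f f).

Definition is_RKHS (R : realType) (X : Type) (V : lmodType R)
    (inner : V -> V -> R) (ev : V -> X -> R) (kx : X -> V) : Prop :=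
      (forall f g, inner f g = inner g f) /\
      (forall a f g h, inner (a *: f + g) h = a * inner f h + inner g h) /\
      (forall f, 0 <= inner f f) /\
      (forall f, inner f f = 0 -> f = 0) /\
      (forall u : nat -> V,
         (forall e : R, 0 < e -> exists N, forall m p, (N <= m)%N -> (N <= p)%N ->
                hnorm inner (u m - u p) < e) ->
         exists l : V, forall e : R, 0 < e -> exists N, forall m, (N <= m)%N ->
                hnorm inner (u m - l) < e) /\
      (forall a f g x, ev (a *: f + g) x = a * ev f x + ev g x) /\
      (forall f g, ev f = ev g -> f = g) /\
      (forall f x, ev f x = inner f (kx x)).

Definition rkernel (R : realType) (X : Type) (V : lmodType R)
    (inner : V -> V -> R) (kx : X -> V) (x x' : X) : R :=
  inner (kx x) (kx x').

Definition d2 (R : realType) (l : R -> R -> R) (y u : R) : R :=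
  derive1 (l y) u.

Definition convex_in2 (R : realType) (l : R -> R -> R) (y : R) : Prop :=
  forall u v t : R, 0 <= t -> t <= 1 ->
    l y (t * u + (1 - t) * v) <= t * l y u + (1 - t) * l y v.

Definition C2_in2 (R : realType) (l : R -> R -> R) (y : R) : Prop :=
  [/\ (forall u : R, derivable (l y) u 1),
      (forall u : R, derivable (derive1 (l y)) u 1) &
      continuous (derive1 (derive1 (l y)))].

(* Regularized empirical risk on D^y = D ∪ {(xnew, y)} (n+1 points):
   1/(n+1) * sum_{(x,y') in D^y} l(y', f(x)) + lam * ||f||^2 *)
Definition reg_risk (R : realType) (X : Type) (V : lmodType R)
    (inner : V -> V -> R) (ev : V -> X -> R) (l : R -> R -> R)
    (n : nat) (Xd : 'I_n -> X) (Yd : 'I_n -> R) (xnew : X) (y lam : R) (f : V) : R :=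
  (n.+1%:R)^-1 * (\sum_(i < n) l (Yd i) (ev f (Xd i)) + l y (ev f xnew))
  + lam * inner f f.

Definition is_minimizer (R : realType) (V : Type) (J : V -> R) (f : V) : Prop :=
  forall g : V, J f <= J g.

From mathcomp Require Import all_boot all_order all_algebra.
From mathcomp Require Import all_classical all_reals all_analysis.
From mathcomp Require Import ring lra.
Set Implicit Arguments. Unset Strict Implicit. Unset Printing Implicit Defensive.
Import Order.TTheory GRing.Theory Num.Theory.
Import numFieldNormedType.Exports.
Local Open Scope ring_scope.
Local Open Scope classical_set_scope.

(* Compare each minimizer with the convex combination moved a fraction t
   towards the other one and add the two optimality inequalities: by
   convexity the training terms cancel and the regularizers leave
   2 lam t (1 - t) ||fy - fz||^2, so only the losses at the new point
   survive.  Dividing by t and letting t -> 0+ gives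
   2 lam (n + 1) ||fy - fz||^2 <= D (l_z'(b) - l_y'(a)) with a = fy(x_{n+1}),
   b = fz(x_{n+1}) and D = a - b.  Monotonicity of l_y' replaces a by b, and
   |D| = |<fy - fz, k_x>| <= ||fy - fz|| sqrt K by Cauchy-Schwarz. *)

Lemma derive1_quotient_cvg_at_right (R : realType) (f : R -> R) (x v : R) :
  derivable f x 1 ->
  (fun t => t^-1 * (f (t * v + x) - f x)) @ 0^'+ --> v * derive1 f x.
Proof.
move=> /derivable1_diffP df.
rewrite (_ : v * _ = 'D_v f x); last by rewrite deriveE // diff1E.
apply: cvg_dnbhs_at_right.
have dv : derivable f x v by exact: diff_derivable.
exact: dv.
Qed.

Section ConvexDerivative.
Variables (R : realType) (g : R -> R).
Hypothesis g_convex : forall u v t : R, 0 <= t -> t <= 1 ->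
  g (t * u + (1 - t) * v) <= t * g u + (1 - t) * g v.

Lemma convex_derive1_le w u : derivable g w 1 -> (u - w) * derive1 g w <= g u - g w.
Proof.
move=> dg.
apply: (ler_cvg_to (derive1_quotient_cvg_at_right (v := u - w) dg) (cvg_cst _)).
near=> t.
have t_gt0 : 0 < t by near: t; exact: nbhs_right_gt.
have t_lt1 : t < 1 by near: t; exact: nbhs_right_lt.
rewrite ler_pdivrMl // (_ : t * (u - w) + w = t * u + (1 - t) * w); last by ring.
by have := g_convex u w (ltW t_gt0) (ltW t_lt1); lra.
Unshelve. all: by end_near.
Qed.

Lemma convex_derive1_monotone p q : derivable g p 1 -> derivable g q 1 ->
  0 <= (derive1 g p - derive1 g q) * (p - q).
Proof.
move=> dp dq.
by have := convex_derive1_le q dp; have := convex_derive1_le p dq; nra.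
Qed.

End ConvexDerivative.

Section InnerProduct.
Variables (R : realType) (V : lmodType R) (inner : V -> V -> R).
Hypothesis innerC : forall f g, inner f g = inner g f.
Hypothesis innerDZl : forall a f g h, inner (a *: f + g) h = a * inner f h + inner g h.
Hypothesis inner_ge0 : forall f, 0 <= inner f f.
Hypothesis inner_eq0 : forall f, inner f f = 0 -> f = 0.

Lemma inner0l h : inner 0 h = 0.
Proof. by have := innerDZl 1 0 0 h; rewrite scaler0 addr0 mul1r; lra. Qed.

Lemma inner_combl a b f g h :
  inner (a *: f + b *: g) h = a * inner f h + b * inner g h.
Proof. by rewrite innerDZl -[b *: g]addr0 innerDZl inner0l addr0. Qed.

Lemma inner_subl f g h : inner (f - g) h = inner f h - inner g h.
Proof.
by rewrite -scaleN1r -[f]scale1r inner_combl scale1r mul1r mulN1r.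
Qed.

Lemma inner_comb_sqr a b f g :
  inner (a *: f + b *: g) (a *: f + b *: g) =
  a ^+ 2 * inner f f + 2 * a * b * inner f g + b ^+ 2 * inner g g.
Proof.
rewrite inner_combl ![inner _ (a *: f + b *: g)]innerC !inner_combl [inner g f]innerC.
ring.
Qed.

Lemma inner_subr_sqr f g :
  inner (f - g) (f - g) = inner f f - 2 * inner f g + inner g g.
Proof. by rewrite -scaleN1r -[f]scale1r inner_comb_sqr scale1r; ring. Qed.

Lemma inner_conv_swap t f g :
  inner (t *: f + (1 - t) *: g) (t *: f + (1 - t) *: g) +
  inner ((1 - t) *: f + t *: g) ((1 - t) *: f + t *: g) =
  inner f f + inner g g - 2 * t * (1 - t) * inner (f - g) (f - g).
Proof. by rewrite !inner_comb_sqr inner_subr_sqr; ring. Qed.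

Lemma inner_Cauchy_Schwarz f g :
  `|inner f g| <= Num.sqrt (inner f f) * Num.sqrt (inner g g).
Proof.
rewrite -sqrtrM ?inner_ge0 // -sqrtr_sqr; apply: ler_wsqrtr.
have [/inner_eq0 ->|g_neq0] := eqVneq (inner g g) 0.
  by rewrite innerC !inner0l expr0n mulr0.
have g_gt0 : 0 < inner g g by rewrite lt0r g_neq0 inner_ge0.
set s := inner f g / inner g g.
have sE : inner f g = s * inner g g by rewrite divfK.
have := mulr_ge0 (ltW g_gt0) (inner_ge0 (1 *: f + (- s) *: g)).
by rewrite inner_comb_sqr sE; nra.
Qed.

End InnerProduct.

Lemma ler_pdiv_of_sqr_le (R : realFieldType) (a b x : R) :
  0 < a -> 0 <= b -> 0 <= x -> a * x ^+ 2 <= x * b -> x <= b / a.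
Proof.
move=> a_gt0 b_ge0 x_ge0 le_ax2_xb; rewrite ler_pdivlMr //.
have [->|x_neq0] := eqVneq x 0; first by rewrite mul0r.
have x_gt0 : 0 < x by rewrite lt0r x_neq0.
by rewrite -(ler_pM2l x_gt0); nra.
Qed.

Section RegularizedRisk.
Variables (R : realType) (X : Type) (V : lmodType R).
Variables (inner : V -> V -> R) (ev : V -> X -> R) (kx : X -> V).
Variables (l : R -> R -> R) (n : nat) (Xd : 'I_n -> X) (Yd : 'I_n -> R) (xnew : X).
Hypothesis innerC : forall f g, inner f g = inner g f.
Hypothesis innerDZl : forall a f g h, inner (a *: f + g) h = a * inner f h + inner g h.
Hypothesis inner_ge0 : forall f, 0 <= inner f f.
Hypothesis inner_eq0 : forall f, inner f f = 0 -> f = 0.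
Hypothesis ev_inner : forall f x, ev f x = inner f (kx x).
Hypothesis loss_convex : forall i, convex_in2 l (Yd i).

Definition train_loss (f : V) : R := \sum_(i < n) l (Yd i) (ev f (Xd i)).

Lemma reg_riskE y lam f : reg_risk inner ev l Xd Yd xnew y lam f =
  n.+1%:R^-1 * (train_loss f + l y (ev f xnew)) + lam * inner f f.
Proof. by []. Qed.

Lemma ev_comb a b f g x : ev (a *: f + b *: g) x = a * ev f x + b * ev g x.
Proof. by rewrite !ev_inner inner_combl. Qed.

Lemma train_loss_conv_swap t f g : 0 <= t -> t <= 1 ->
  train_loss (t *: f + (1 - t) *: g) + train_loss ((1 - t) *: f + t *: g)
  <= train_loss f + train_loss g.
Proof.
move=> t_ge0 t_le1; rewrite -!big_split /=; apply: ler_sum => i _.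
rewrite !ev_comb.
have := loss_convex i (ev f (Xd i)) (ev g (Xd i)) t_ge0 t_le1.
have := @loss_convex i (ev f (Xd i)) (ev g (Xd i)) (1 - t).
rewrite subr_ge0 subKr lerBlDr ler_wpDr // => /(_ t_le1 isT).
lra.
Qed.

Section Minimizers.
Variables (y z lam : R) (fy fz : V).
Hypothesis fy_min : is_minimizer (reg_risk inner ev l Xd Yd xnew y lam) fy.
Hypothesis fz_min : is_minimizer (reg_risk inner ev l Xd Yd xnew z lam) fz.
Hypothesis ly_convex : convex_in2 l y.
Hypothesis ly_der : forall u, derivable (l y) u 1.
Hypothesis lz_der : forall u, derivable (l z) u 1.
Let a := ev fy xnew.
Let b := ev fz xnew.

Lemma minimizers_conv_swap t : 0 <= t -> t <= 1 ->
  2 * lam * t * (1 - t) * inner (fy - fz) (fy - fz) <=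
  n.+1%:R^-1 * (l z (t * (a - b) + b) - l z b + (l y (t * (b - a) + a) - l y a)).
Proof.
move=> t_ge0 t_le1.
have := fz_min (t *: fy + (1 - t) *: fz).
have := fy_min ((1 - t) *: fy + t *: fz).
rewrite !reg_riskE !ev_comb -/a -/b.
rewrite (_ : t * a + (1 - t) * b = t * (a - b) + b); last by ring.
rewrite (_ : (1 - t) * a + t * b = t * (b - a) + a); last by ring.
have inv_ge0 : 0 <= n.+1%:R^-1 :> R by rewrite invr_ge0.
have := ler_wpM2l inv_ge0 (train_loss_conv_swap fy fz t_ge0 t_le1).
have := congr1 (fun r => lam * r) (inner_conv_swap innerC innerDZl t fy fz).
by rewrite /=; set ci := n.+1%:R^-1; lra.
Qed.

Lemma minimizers_derive1_gap : 0 <= lam ->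
  2 * lam * n.+1%:R * inner (fy - fz) (fy - fz) <=
  (a - b) * derive1 (l z) b + (b - a) * derive1 (l y) a.
Proof.
move=> lam_ge0.
set A := 2 * lam * n.+1%:R * inner (fy - fz) (fy - fz).
have A_cvg : (fun t : R => A * (1 - t)) @ 0^'+ --> A.
  rewrite -[X in _ --> X]mulr1 -[X in _ --> A * X]subr0.
  apply: cvg_at_right_filter; apply: cvgM; first exact: cvg_cst.
  by apply: cvgB; [exact: cvg_cst | exact: cvg_id].
apply: (ler_cvg_to A_cvg (cvgD (derive1_quotient_cvg_at_right (v := a - b) (@lz_der b))
                               (derive1_quotient_cvg_at_right (v := b - a) (@ly_der a)))).
near=> t.
have t_gt0 : 0 < t by near: t; exact: nbhs_right_gt.
have t_lt1 : t < 1 by near: t; exact: nbhs_right_lt.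
rewrite addrfctE /= -mulrDr ler_pdivlMl // /A.
have := minimizers_conv_swap (ltW t_gt0) (ltW t_lt1).
move=> /(ler_wpM2l (ler0n _ n.+1)); rewrite mulVKf ?pnatr_eq0 //.
lra.
Unshelve. all: by end_near.
Qed.

Lemma minimizers_dist_le : 0 < lam ->
  hnorm inner (fy - fz)
    <= Num.sqrt (rkernel inner kx xnew xnew)
       * ((2%:R)^-1 * `| - d2 l z b + d2 l y b|) / (lam * n.+1%:R).
Proof.
move=> lam_gt0; set N := hnorm inner (fy - fz); set e := - d2 l z b + d2 l y b.
have N_sqr : N ^+ 2 = inner (fy - fz) (fy - fz) by rewrite sqr_sqrtr.
have gap := minimizers_derive1_gap (ltW lam_gt0); rewrite -N_sqr in gap.
have mono := convex_derive1_monotone ly_convex (@ly_der a) (@ly_der b).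
have CS : `|a - b| <= N * Num.sqrt (rkernel inner kx xnew xnew).
  rewrite /a /b !ev_inner -inner_subl //.
  exact: inner_Cauchy_Schwarz.
have gap_e : 2 * lam * n.+1%:R * N ^+ 2 <= `|a - b| * `|e|.
  rewrite -normrM -normrN; apply: le_trans (ler_norm _).
  by apply: le_trans gap _; rewrite /e /d2; nra.
apply: ler_pdiv_of_sqr_le; rewrite ?mulr_gt0 ?mulr_ge0 ?sqrtr_ge0 //.
by have := ler_wpM2r (normr_ge0 e) CS; lra.
Qed.

End Minimizers.
End RegularizedRisk.

Theorem proposition12 (R : realType) (X : Type) (Ysp : set R)
    (V : lmodType R) (inner : V -> V -> R) (ev : V -> X -> R) (kx : X -> V)
    (l : R -> R -> R) (n : nat) (Xd : 'I_n -> X) (Yd : 'I_n -> R) (xnew : X) :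
  is_RKHS inner ev kx ->
  (forall i, Ysp (Yd i)) ->
  (forall y, Ysp y -> convex_in2 l y /\ C2_in2 l y) ->
  forall (y z lam : R) (fy fz : V),
    Ysp y -> Ysp z -> 0 < lam ->
    is_minimizer (reg_risk inner ev l Xd Yd xnew y lam) fy ->
    is_minimizer (reg_risk inner ev l Xd Yd xnew z lam) fz ->
    hnorm inner (fy - fz)
      <= Num.sqrt (rkernel inner kx xnew xnew)
         * ((2%:R)^-1 * `| - d2 l z (ev fz xnew) + d2 l y (ev fz xnew)|)
         / (lam * n.+1%:R).
Proof.
move=> [innerC [innerDZl [inner_ge0 [inner_eq0 [_ [_ [_ ev_inner]]]]]]].
move=> Yd_in l_reg y z lam fy fz Yy Yz lam_gt0 fy_min fz_min.
have [[ly_convex [ly_der _ _]] [_ [lz_der _ _]]] := (l_reg y Yy, l_reg z Yz).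
have loss_convex i : convex_in2 l (Yd i) by have [] := l_reg _ (Yd_in i).
exact: (minimizers_dist_le innerC innerDZl inner_ge0 inner_eq0 ev_inner
  loss_convex fy_min fz_min ly_convex ly_der lz_der lam_gt0).
Qed.
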